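(* If a UCPT$(n)$-map $T$ has an exact factorization through $M_n(\mathbb{C})\otimes M_k(\mathbb{C})$ for some integer $k\geq1$, then $T$ is factorizable of degree $k$.
   Context: A UCPT$(n)$-map is a unital completely positive trace-preserving linear map on $M_n(\mathbb{C})$; $\tau_k$ is the normalized trace on $M_k(\mathbb{C})$. $T$ has an exact factorization through $M_n(\mathbb{C})\otimes M_k(\mathbb{C})$ if there is a unitary $u\in M_n(\mathbb{C})\otimes M_k(\mathbb{C})$ with $T(x)=(\mathrm{id}_n\otimes\tau_k)(u^*(x\otimes1_k)u)$ for all $x\in M_n(\mathbb{C})$. $T$ is factorizable of degree $k$ if $T\otimes S_k\in\mathrm{conv}(\mathrm{Aut}(M_n(\mathbb{C})\otimes M_k(\mathbb{C})))$, where $S_k(y)=\tau_k(y)1_k$, $\mathrm{Aut}$ consists of the maps $x\mapsto u^*xu$ with $u$ unitary, and $\mathrm{conv}$ is convex hull. *)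

From HB Require Import structures.
From mathcomp Require Import all_boot all_order all_algebra.
From mathcomp Require Import reals complex mxtens.
Set Implicit Arguments. Unset Strict Implicit. Unset Printing Implicit Defensive.
Import Order.TTheory GRing.Theory Num.Theory.
Local Open Scope ring_scope.

Definition adj (C : numClosedFieldType) m n (A : 'M[C]_(m, n)) : 'M[C]_(n, m) :=
  (map_mx Num.conj A)^T.

Definition unitary (C : numClosedFieldType) m (u : 'M[C]_m) : Prop :=
  adj u *m u = 1%:M /\ u *m adj u = 1%:M.

Definition psd (C : numClosedFieldType) m (A : 'M[C]_m) : Prop :=
  exists B : 'M[C]_m, A = adj B *m B.

Definition is_linear (C : numClosedFieldType) p q (T : 'M[C]_p -> 'M[C]_q) :=
  forall (c : C) x y, T (c *: x + y) = c *: T x + T y.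

(* M_n(C) (x) M_k(C) is identified with M_(n*k)(C) via the Kronecker
   product tensmx (x (x) y = x *t y), index (i,a) |-> i*k + a. *)

(* the (a,b) block of X in M_n (x) M_k, i.e. X = \sum_(a,b) block X a b (x) e_ab *)
Definition block (C : numClosedFieldType) n k (X : 'M[C]_(n * k)) (a b : 'I_k)
  : 'M[C]_n :=
  \matrix_(i, j) X (mxtens_index (i, a)) (mxtens_index (j, b)).

(* tensor product of linear maps: (Phi (x) Psi)(x (x) e_ab) = Phi x (x) Psi e_ab *)
Definition tens_map (C : numClosedFieldType) n k
  (Phi : 'M[C]_n -> 'M[C]_n) (Psi : 'M[C]_k -> 'M[C]_k) (X : 'M[C]_(n * k))
  : 'M[C]_(n * k) :=
  \sum_(a < k) \sum_(b < k) (Phi (block X a b) *t Psi (delta_mx a b)).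

Definition ntr (C : numClosedFieldType) k (y : 'M[C]_k) : C := \tr y / k%:R.

Definition Smap (C : numClosedFieldType) k (y : 'M[C]_k) : 'M[C]_k := ntr y *: 1%:M.

(* id_n (x) tau_k : M_n (x) M_k -> M_n *)
Definition ptrace (C : numClosedFieldType) n k (X : 'M[C]_(n * k)) : 'M[C]_n :=
  \sum_(a < k) \sum_(b < k) (ntr (delta_mx a b : 'M[C]_k) *: block X a b).

Definition completely_positive (C : numClosedFieldType) n (T : 'M[C]_n -> 'M[C]_n) :=
  forall (m : nat) (X : 'M[C]_(n * m)),
    psd X -> psd (tens_map T (fun y : 'M[C]_m => y) X).

Definition UCPT (C : numClosedFieldType) n (T : 'M[C]_n -> 'M[C]_n) : Prop :=
  [/\ is_linear T, T 1%:M = 1%:M, completely_positive T &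
      forall x, \tr (T x) = \tr x].

Definition exact_factorization (C : numClosedFieldType) n k
  (T : 'M[C]_n -> 'M[C]_n) : Prop :=
  exists u : 'M[C]_(n * k), unitary u /\
    forall x : 'M[C]_n, T x = ptrace (adj u *m (x *t (1%:M : 'M[C]_k)) *m u).

(* T (x) S_k lies in conv(Aut(M_n (x) M_k)) *)
Definition factorizable_of_degree (C : numClosedFieldType) n k
  (T : 'M[C]_n -> 'M[C]_n) : Prop :=
  exists (m : nat) (lam : 'I_m -> C) (U : 'I_m -> 'M[C]_(n * k)),
    [/\ forall i, 0 <= lam i, \sum_(i < m) lam i = 1,
        forall i, unitary (U i) &
        forall X : 'M[C]_(n * k),
          tens_map T (@Smap C k) X = \sum_(i < m) lam i *: (adj (U i) *m X *m U i)].

From HB Require Import structures.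
From mathcomp Require Import all_boot all_order all_algebra.
From mathcomp Require Import reals complex mxtens.
Import Order.TTheory GRing.Theory Num.Theory.
Local Open Scope ring_scope.
Set Implicit Arguments. Unset Strict Implicit.

(* Twirling M_k over the unitaries W (a sign change followed by a cyclic
   shift) gives S_k: averaging over the signs kills the off-diagonal entries
   and averaging over the shifts equalizes the diagonal ones.  So twirling
   M_n (x) M_k over the 1 (x) W gives E = id (x) S_k, i.e. X |-> ptrace X (x) 1.
   An exact factorization by u means T (x) S_k = E o Ad(u) o E, and a
   composition of uniform averages of unitary conjugations is again one. *)

Section Adjoint.
Variable C : numClosedFieldType.

Lemma adj_mul m n p (A : 'M[C]_(m, n)) (B : 'M[C]_(n, p)) :
  adj (A *m B) = adj B *m adj A.
Proof. by rewrite /adj map_mxM trmx_mul. Qed.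

Lemma adj_tens m n p q (A : 'M[C]_(m, n)) (B : 'M[C]_(p, q)) :
  adj (A *t B) = adj A *t adj B.
Proof. by apply/matrixP=> i j; rewrite !mxE rmorphM. Qed.

Lemma adj1 m : adj (1%:M : 'M[C]_m) = 1%:M.
Proof. by apply/matrixP=> i j; rewrite !mxE eq_sym rmorph_nat. Qed.

Lemma tensmx11 m p : (1%:M : 'M[C]_m) *t (1%:M : 'M[C]_p) = 1%:M.
Proof.
apply/matrixP=> i j.
case: (mxtens_indexP i)=> i0 i1; case: (mxtens_indexP j)=> j0 j1.
rewrite tensmxE !mxE (inj_eq (can_inj (@mxtens_indexK m p))) xpair_eqE.
by rewrite -natrM mulnb.
Qed.

Lemma unitary1 m : unitary (1%:M : 'M[C]_m).
Proof. by split; rewrite adj1 mulmx1. Qed.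

Lemma unitary_mul m (A B : 'M[C]_m) :
  unitary A -> unitary B -> unitary (A *m B).
Proof.
move=> [AA AA'] [BB BB']; split; rewrite adj_mul.
  by rewrite mulmxA -(mulmxA _ _ A) AA mulmx1 BB.
by rewrite mulmxA -(mulmxA _ B) BB' mulmx1 AA'.
Qed.

Lemma unitary_tens m p (A : 'M[C]_m) (B : 'M[C]_p) :
  unitary A -> unitary B -> unitary (A *t B).
Proof.
by move=> [AA AA'] [BB BB']; split; rewrite adj_tens tensmx_mul ?AA ?BB ?AA' ?BB' tensmx11.
Qed.

End Adjoint.

Section Tensor.
Variable C : numClosedFieldType.

Lemma tensmx_suml m n p q I (r : seq I) (P : pred I) (F : I -> 'M[C]_(m, n))
    (B : 'M[C]_(p, q)) :
  (\sum_(i <- r | P i) F i) *t B = \sum_(i <- r | P i) (F i *t B).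
Proof.
apply/matrixP=> i j; rewrite summxE !mxE summxE mulr_suml.
by apply: eq_bigr=> x _; rewrite !mxE.
Qed.

Lemma tensmx_sumr m n p q I (r : seq I) (P : pred I) (F : I -> 'M[C]_(p, q))
    (A : 'M[C]_(m, n)) :
  A *t (\sum_(i <- r | P i) F i) = \sum_(i <- r | P i) (A *t F i).
Proof.
apply/matrixP=> i j; rewrite summxE !mxE summxE mulr_sumr.
by apply: eq_bigr=> x _; rewrite !mxE.
Qed.

Lemma tensmxZl m n p q c (A : 'M[C]_(m, n)) (B : 'M[C]_(p, q)) :
  (c *: A) *t B = c *: (A *t B).
Proof. by apply/matrixP=> i j; rewrite !mxE mulrA. Qed.

Lemma tensmxZr m n p q c (A : 'M[C]_(m, n)) (B : 'M[C]_(p, q)) :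
  A *t (c *: B) = c *: (A *t B).
Proof. by apply/matrixP=> i j; rewrite !mxE mulrCA. Qed.

Lemma mxtrace_delta n (a b : 'I_n) : \tr (delta_mx a b : 'M[C]_n) = (a == b)%:R.
Proof.
rewrite /mxtrace (bigD1 a) //= big1 ?addr0 => [|i /negbTE i_a]; last by rewrite mxE i_a.
by rewrite mxE eqxx.
Qed.

Lemma mulmx_delta_entry m n p q (A : 'M[C]_(m, n)) (B : 'M[C]_(p, q)) a b c d :
  (A *m delta_mx a b *m B) c d = A c a * B b d.
Proof.
rewrite mxE (bigD1 b) //= big1 ?addr0 => [|x /negbTE x_b]; last first.
  rewrite mxE big1 ?mul0r // => y _.
  by rewrite mxE x_b andbF mulr0.
rewrite mxE (bigD1 a) //= big1 ?addr0 => [|y /negbTE y_a]; last first.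
  by rewrite mxE y_a mulr0.
by rewrite mxE !eqxx mulr1.
Qed.

Lemma sum_block_tens n k (X : 'M[C]_(n * k)) :
  \sum_(a < k) \sum_(b < k) (block X a b *t delta_mx a b) = X.
Proof.
apply/matrixP=> i j.
case: (mxtens_indexP i)=> i0 i1; case: (mxtens_indexP j)=> j0 j1.
rewrite summxE (bigD1 i1) //= summxE (bigD1 j1) //= tensmxE !mxE !eqxx mulr1.
rewrite big1 ?addr0 => [|b /negbTE b_j1]; last first.
  by rewrite tensmxE !mxE eqxx eq_sym b_j1 andbF mulr0.
rewrite big1 ?addr0 // => a /negbTE a_i1; rewrite summxE big1 // => b _.
by rewrite tensmxE !mxE eq_sym a_i1 mulr0.
Qed.

End Tensor.

Section LinearMap.
Variables (C : numClosedFieldType) (p q : nat) (f : 'M[C]_p -> 'M[C]_q).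
Hypothesis f_lin : is_linear f.

Lemma is_linear0 : f 0 = 0.
Proof.
have := f_lin 1 0 0; rewrite !scale1r addr0 => f00.
by apply: (addrI (f 0)); rewrite addr0 -f00.
Qed.

Lemma is_linearZ c x : f (c *: x) = c *: f x.
Proof. by rewrite -[c *: x]addr0 f_lin is_linear0 addr0. Qed.

Lemma is_linear_sum I (r : seq I) (P : pred I) (x : I -> 'M[C]_p) :
  f (\sum_(i <- r | P i) x i) = \sum_(i <- r | P i) f (x i).
Proof.
elim/big_rec2: _ => [|i y fy _ <-]; first exact: is_linear0.
by rewrite -[f (x i)]scale1r -f_lin scale1r.
Qed.

End LinearMap.

Lemma is_linear_eq_delta (C : numClosedFieldType) p q (f g : 'M[C]_p -> 'M[C]_q) :
  is_linear f -> is_linear g ->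
  (forall a b, f (delta_mx a b) = g (delta_mx a b)) -> f =1 g.
Proof.
move=> f_lin g_lin fg x; rewrite (matrix_sum_delta x) !is_linear_sum //.
by apply: eq_bigr=> a _; rewrite !is_linear_sum //; apply: eq_bigr=> b _;
  rewrite !is_linearZ ?fg.
Qed.

Section Twirl.
Variable C : numClosedFieldType.

Definition twirl (I : finType) N (U : I -> 'M[C]_N) (X : 'M[C]_N) : 'M[C]_N :=
  #|I|%:R^-1 *: \sum_i adj (U i) *m X *m U i.

Lemma twirl_is_linear (I : finType) N (U : I -> 'M[C]_N) : is_linear (twirl U).
Proof.
move=> c x y; rewrite /twirl scalerA mulrC -scalerA -scalerDr; congr (_ *: _).
rewrite scaler_sumr -big_split /=.
by apply: eq_bigr=> i _; rewrite mulmxDr -scalemxAr mulmxDl -scalemxAl.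
Qed.

Lemma twirl_conj (I : finType) N (U : I -> 'M[C]_N) u X :
  adj u *m twirl U X *m u = twirl (fun i => U i *m u) X.
Proof.
rewrite /twirl -scalemxAr -scalemxAl mulmx_sumr mulmx_suml; congr (_ *: _).
by apply: eq_bigr=> i _; rewrite adj_mul !mulmxA.
Qed.

Lemma twirl_comp (I J : finType) N (U : I -> 'M[C]_N) (W : J -> 'M[C]_N) X :
  twirl U (twirl W X) = twirl (fun ij : I * J => W ij.2 *m U ij.1) X.
Proof.
rewrite /twirl card_prod natrM invfM -scalerA; congr (_ *: _).
rewrite -(pair_bigA _ (fun i j => adj (W j *m U i) *m X *m (W j *m U i))).
rewrite [RHS]scaler_sumr; apply: eq_bigr=> i _.
rewrite -scalemxAr -scalemxAl mulmx_sumr mulmx_suml; congr (_ *: _).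
by apply: eq_bigr=> j _; rewrite adj_mul !mulmxA.
Qed.

Lemma twirl_tens1 (I : finType) n N (W : I -> 'M[C]_N) (X : 'M[C]_(n * N)) :
  twirl (fun i => 1%:M *t W i) X = tens_map id (twirl W) X.
Proof.
rewrite -[X in twirl _ X]sum_block_tens !(is_linear_sum (twirl_is_linear _)).
apply: eq_bigr=> a _; rewrite !(is_linear_sum (twirl_is_linear _)).
apply: eq_bigr=> b _; rewrite /twirl tensmxZr tensmx_sumr; congr (_ *: _).
by apply: eq_bigr=> i _; rewrite adj_tens adj1 !tensmx_mul mul1mx mulmx1.
Qed.

End Twirl.

Section DepolarizingMap.
Variable C : numClosedFieldType.

Lemma Smap_is_linear k : is_linear (@Smap C k).
Proof. by move=> c x y; rewrite /Smap /ntr mxtraceD mxtraceZ mulrDl scalerDl scalerA mulrA. Qed.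

Lemma tens_map_Smap n k (f : 'M[C]_n -> 'M[C]_n) (X : 'M[C]_(n * k)) :
  is_linear f -> tens_map f (@Smap C k) X = f (ptrace X) *t 1%:M.
Proof.
move=> f_lin; rewrite /ptrace (is_linear_sum f_lin) tensmx_suml.
apply: eq_bigr=> a _; rewrite (is_linear_sum f_lin) tensmx_suml.
by apply: eq_bigr=> b _; rewrite (is_linearZ f_lin) /Smap tensmxZr tensmxZl.
Qed.

End DepolarizingMap.

Section SignShift.
Variables (C : numClosedFieldType) (K : nat).
Local Notation k := K.+1.
Local Notation signs := {ffun 'I_k -> bool}.

Definition sign_shift (g : signs * 'I_k) : 'M[C]_k :=
  \matrix_(a, b) ((a == b + g.2)%:R * (-1) ^+ g.1 a).

Lemma sign_shift_unitary g : unitary (sign_shift g).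
Proof.
have sqr_sign (b : bool) : (-1) ^+ b * (-1) ^+ b = 1 :> C by rewrite -expr2 sqrr_sign.
case: g => s j; split; apply/matrixP=> c d; rewrite !mxE.
  rewrite (bigD1 (c + j)) //= big1 ?addr0 => [|x /negbTE x_cj]; last first.
    by rewrite !mxE x_cj mul0r rmorph0 mul0r.
  rewrite !mxE eqxx rmorphM /= rmorph_sign rmorph_nat (inj_eq (addIr j)).
  by case: eqVneq => [->|_]; rewrite ?mul1r ?sqr_sign ?mul0r ?mulr0.
rewrite (bigD1 (c - j)) //= big1 ?addr0 => [|x x_cj]; last first.
  rewrite !mxE; have /negbTE -> : c != x + j.
    by apply: contra x_cj => /eqP ->; rewrite addrK.
  by rewrite !mul0r.
rewrite !mxE subrK eqxx rmorphM /= rmorph_sign rmorph_nat eq_sym.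
by case: eqVneq => [->|_]; rewrite ?mul1r ?sqr_sign ?mul0r ?mulr0.
Qed.

Lemma sum_sign_ffun (p q : 'I_k) :
  \sum_(s : signs) (-1) ^+ s p * (-1) ^+ s q = (p == q)%:R * #|signs|%:R :> C.
Proof.
case: eqVneq => [<-|pq].
  rewrite mul1r -sumr_const; apply: eq_bigr=> s _.
  by rewrite -expr2 sqrr_sign.
pose flip (s : signs) : signs := [ffun x => s x (+) (x == p)].
have flipK : involutive flip by move=> s; apply/ffunP=> x; rewrite !ffunE addbK.
set X := \sum_s _; have X_opp : X = - X.
  rewrite {1}/X (reindex_inj (inv_inj flipK)) /= -sumrN.
  apply: eq_bigr=> s _; rewrite !ffunE eqxx addbT [q == p]eq_sym (negbTE pq) addbF.
  by case: (s p); rewrite ?expr0 ?expr1 ?mulN1r ?mul1r ?opprK.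
have : X *+ 2 == 0 by rewrite mulr2n {1}X_opp addNr.
by rewrite mulr0n mul0r mulrn_eq0 /= => /eqP.
Qed.

Lemma twirl_sign_shift_delta (p q : 'I_k) :
  twirl sign_shift (delta_mx p q) = Smap (delta_mx p q).
Proof.
have shift_sum (c d : 'I_k) :
    \sum_(j : 'I_k) (p == c + j)%:R * (p == d + j)%:R = (c == d)%:R :> C.
  rewrite (bigD1 (p - c)) //= big1 ?addr0 => [|j j_pc]; last first.
    have /negbTE -> : p != c + j by apply: contra j_pc => /eqP ->; rewrite addrC addKr.
    by rewrite mul0r.
  by rewrite -[c == d](inj_eq (addIr (p - c))) [c + _]addrC subrK eqxx mul1r eq_sym.
have signs_gt0 : (0 < #|signs|)%N by apply/card_gt0P; exists [ffun=> false].
apply/matrixP=> c d; rewrite /twirl /Smap /ntr mxtrace_delta !mxE summxE.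
under eq_bigr=> g _ do rewrite mulmx_delta_entry !mxE rmorphM /= rmorph_sign rmorph_nat.
rewrite -(pair_bigA _ (fun (s : signs) (j : 'I_k) =>
  (p == c + j)%:R * (-1) ^+ s p * ((q == d + j)%:R * (-1) ^+ s q))) exchange_big /=.
under eq_bigr=> j _ do rewrite (eq_bigr _ (fun s _ => mulrACA _ _ _ _)) -mulr_sumr.
rewrite sum_sign_ffun -big_distrl /=.
case: eqVneq => [<-|_] /=; last by rewrite !(mul0r, mulr0).
rewrite shift_sum card_prod card_ord natrM invfM !mul1r [_ * #|signs|%:R]mulrC.
by rewrite mulrACA mulVf ?mul1r // pnatr_eq0 -lt0n.
Qed.

Lemma twirl_sign_shift : twirl sign_shift =1 @Smap C k.
Proof.
exact: is_linear_eq_delta (twirl_is_linear _) (@Smap_is_linear _ _) twirl_sign_shift_delta.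
Qed.

Lemma twirl_tens1_sign_shift n (X : 'M[C]_(n * k)) :
  twirl (fun g => 1%:M *t sign_shift g) X = ptrace X *t 1%:M.
Proof.
rewrite twirl_tens1 -(@tens_map_Smap _ _ _ id) //.
by apply: eq_bigr=> a _; apply: eq_bigr=> b _; rewrite twirl_sign_shift.
Qed.

End SignShift.

Arguments sign_shift {C K} g.

Lemma factorizable_twirl (C : numClosedFieldType) n k (T : 'M[C]_n -> 'M[C]_n)
    (I : finType) (i0 : I) (U : I -> 'M[C]_(n * k)) :
  (forall i, unitary (U i)) ->
  (forall X, tens_map T (@Smap C k) X = twirl U X) ->
  factorizable_of_degree k T.
Proof.
move=> U_unitary TS_twirl; have I_gt0 : (0 < #|I|)%N by apply/card_gt0P; exists i0.
exists #|I|, (fun _ => #|I|%:R^-1), (fun i => U (enum_val i)); split=> //.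
- by move=> _; rewrite invr_ge0 ler0n.
- by rewrite sumr_const card_ord -[_ *+ _]mulr_natl mulfV // pnatr_eq0 -lt0n.
move=> X; rewrite TS_twirl /twirl scaler_sumr.
exact: (big_enum_val (fun i => #|I|%:R^-1 *: (adj (U i) *m X *m U i))).
Qed.

Unset Implicit Arguments.

Theorem corollary3p5 (R : realType) (n k : nat) (T : 'M[R[i]]_n -> 'M[R[i]]_n) :
  (0 < k)%N -> UCPT T -> exact_factorization k T -> factorizable_of_degree k T.
Proof.
case: k => [//|K] _ [T_lin _ _ _] [u [u_unitary T_fact]].
pose V g : 'M[R[i]]_(n * K.+1) := 1%:M *t sign_shift g.
have V_unitary g : unitary (V g) := unitary_tens (unitary1 _ _) (sign_shift_unitary _ _).
apply: (factorizable_twirl ([ffun=> false], ord0, ([ffun=> false], ord0))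
  (U := fun gh => V gh.2 *m u *m V gh.1)).
  move=> gh; exact: unitary_mul (unitary_mul (V_unitary _) u_unitary) (V_unitary _).
move=> X; rewrite tens_map_Smap // T_fact -!twirl_tens1_sign_shift.
by rewrite twirl_conj twirl_comp.
Qed.
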